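(* Let $(X,\tau_1,\tau_2)$ be a bitopological space, $i,j\in\{1,2\}$, $i\neq j$, which is $(i,j)_r$-nearly paralindelöf, $(i,j)$-almost regular and a $j$-$P$-space. Then for every cover $\{U_\alpha:\alpha\in\Delta\}$ of $X$ by $(i,j)$-regular open sets there is a $j$-locally countable cover $\{V_\alpha:\alpha\in\Delta\}$ of $X$ by $(i,j)$-regular open sets, indexed by the same set $\Delta$, such that $j\text{-}\mathrm{cl}(V_\alpha)\subseteq U_\alpha$ for every $\alpha\in\Delta$.
   Context: $(X,\tau_1,\tau_2)$ is a bitopological space and $i,j\in\{1,2\}$, $i\neq j$. For $k\in\{1,2\}$, $k\text{-}\mathrm{int}$ and $k\text{-}\mathrm{cl}$ denote interior and closure with respect to $\tau_k$; ''$k$-open'' means $\tau_k$-open. A set $A$ is $(i,j)$-regular open if $A=i\text{-}\mathrm{int}(j\text{-}\mathrm{cl}(A))$. $X$ is $(i,j)$-almost regular if for each $x\in X$ and each $(i,j)$-regular open set $U$ containing $x$ there is an $(i,j)$-regular open set $V$ with $x\in V\subseteq j\text{-}\mathrm{cl}(V)\subseteq U$. A family is a cover of $X$ if its union is $X$. A family is $k$-locally countable if every $x\in X$ has a $k$-open neighbourhood meeting at most countably many of its members. $X$ is a $k$-$P$-space if every intersection of countably many $k$-open sets is $k$-open. $X$ is $(i,j)_r$-nearly paralindelöf if every cover $\{U_\alpha:\alpha\in\Delta\}$ of $X$ by $(i,j)$-regular open sets has a $j$-locally countable cover $\{V_\beta:\beta\in B\}$ of $X$ by $(i,j)$-regular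 open sets such that for each $\beta\in B$ there is $\alpha(\beta)\in\Delta$ with $j\text{-}\mathrm{cl}(V_\beta)\subseteq U_{\alpha(\beta)}$. *)

From Stdlib Require Import Classical.

Definition set (X : Type) := X -> Prop.

Definition subset {X : Type} (A B : set X) : Prop := forall x, A x -> B x.
Definition set_eq {X : Type} (A B : set X) : Prop := forall x, A x <-> B x.

Definition is_topology {X : Type} (tau : set X -> Prop) : Prop :=
  tau (fun _ => True) /\
  (forall A B, tau A -> tau B -> tau (fun x => A x /\ B x)) /\
  (forall (I : Type) (F : I -> set X), (forall k, tau (F k)) ->
     tau (fun x => exists k, F k x)).

Definition btop {X : Type} (tau1 tau2 : set X -> Prop) (k : nat) : set X -> Prop :=
  if Nat.eqb k 1 then tau1 else tau2.

Definition interior {X : Type} (tau : set X -> Prop) (A : set X) : set X :=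
  fun x => exists G, tau G /\ G x /\ subset G A.

Definition closure {X : Type} (tau : set X -> Prop) (A : set X) : set X :=
  fun x => forall G, tau G -> G x -> exists y, G y /\ A y.

Definition ij_regular_open {X : Type} (taui tauj : set X -> Prop) (A : set X) : Prop :=
  set_eq A (interior taui (closure tauj A)).

Definition ij_almost_regular {X : Type} (taui tauj : set X -> Prop) : Prop :=
  forall (x : X) (U : set X), ij_regular_open taui tauj U -> U x ->
    exists V, ij_regular_open taui tauj V /\ V x /\
      subset V (closure tauj V) /\ subset (closure tauj V) U.

Definition is_cover {X I : Type} (F : I -> set X) : Prop :=
  forall x, exists k, F k x.

Definition countable_set {I : Type} (S : I -> Prop) : Prop :=
  exists f : I -> nat, forall a b, S a -> S b -> f a = f b -> a = b.

Definition locally_countable {X I : Type} (tau : set X -> Prop) (F : I -> set X) : Prop :=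
  forall x, exists G, tau G /\ G x /\
    countable_set (fun k => exists y, G y /\ F k y).

Definition P_space {X : Type} (tau : set X -> Prop) : Prop :=
  forall G : nat -> set X, (forall n, tau (G n)) -> tau (fun x => forall n, G n x).

Definition ij_r_nearly_paralindelof {X : Type} (taui tauj : set X -> Prop) : Prop :=
  forall (Delta : Type) (U : Delta -> set X),
    (forall a, ij_regular_open taui tauj (U a)) -> is_cover U ->
    exists (B : Type) (V : B -> set X),
      (forall b, ij_regular_open taui tauj (V b)) /\ is_cover V /\
      locally_countable tauj V /\
      (forall b, exists a, subset (closure tauj (V b)) (U a)).

(* Near paralindelöfness gives a j-locally countable (i,j)-regular open refinement W
   with j-cl(W_b) ⊆ U_(g b).  Grouping it along g, let A_a be the union of the W_b with
   g b = a; then V_a := i-int(j-cl(A_a)) is (i,j)-regular open, contains every such W_b,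
   and meets a j-open set only if A_a does, so V is still j-locally countable.  In a
   j-P-space the closure of a locally countable union is the union of the closures: a
   point outside all of them is separated from the countably many members near it by
   countably many j-open sets, whose intersection is j-open.  Hence
   j-cl(V_a) ⊆ j-cl(A_a) ⊆ U_a. *)
From Stdlib Require Import Classical ClassicalEpsilon.

Lemma btop_topology {X : Type} (tau1 tau2 : set X -> Prop) (k : nat) :
  is_topology tau1 -> is_topology tau2 -> is_topology (btop tau1 tau2 k).
Proof. intros H1 H2; unfold btop; destruct (Nat.eqb k 1); assumption. Qed.

Lemma countable_set_image {I J : Type} (S : I -> Prop) (g : I -> J) :
  countable_set S -> countable_set (fun a => exists k, S k /\ g k = a).
Proof.
  intros [f Hf].
  assert (Hpick : forall a, exists n, (exists k, S k /\ g k = a) ->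
                    exists k, S k /\ g k = a /\ f k = n).
  { intro a. destruct (classic (exists k, S k /\ g k = a)) as [[k [Sk gk]] | none].
    - exists (f k); intros _; exists k; auto.
    - exists 0; intro H; contradiction. }
  destruct (choice _ Hpick) as [f' Hf'].
  exists f'; intros a1 a2 H1 H2 Heq.
  destruct (Hf' a1 H1) as [k1 [S1 [<- e1]]].
  destruct (Hf' a2 H2) as [k2 [S2 [<- e2]]].
  f_equal; apply Hf; congruence.
Qed.

Lemma countable_set_sub {I : Type} (S T : I -> Prop) :
  (forall k, S k -> T k) -> countable_set T -> countable_set S.
Proof. intros ST [f Hf]; exists f; auto. Qed.

Section Closure.
Variables (X : Type) (tau : set X -> Prop).

Lemma subset_closure (A : set X) : subset A (closure tau A).
Proof. intros x Ax G _ Gx; exists x; auto. Qed.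

Lemma closure_monotone (A B : set X) :
  subset A B -> subset (closure tau A) (closure tau B).
Proof.
  intros AB x Hx G tG Gx; destruct (Hx G tG Gx) as [y [Gy Ay]]; exists y; auto.
Qed.

Lemma closure_idem (A : set X) : subset (closure tau (closure tau A)) (closure tau A).
Proof.
  intros x Hx G tG Gx; destruct (Hx G tG Gx) as [y [Gy Hy]]; exact (Hy G tG Gy).
Qed.

Lemma interior_subset (A : set X) : subset (interior tau A) A.
Proof. intros x [G [_ [Gx GA]]]; exact (GA x Gx). Qed.

Lemma interior_monotone (A B : set X) :
  subset A B -> subset (interior tau A) (interior tau B).
Proof.
  intros AB x [G [tG [Gx GA]]]; exists G; split; [exact tG | split; [exact Gx |]].
  intros y Gy; exact (AB y (GA y Gy)).
Qed.

Lemma not_in_closure (A : set X) (x : X) :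
  ~ closure tau A x -> exists G, tau G /\ G x /\ forall y, G y -> ~ A y.
Proof.
  intros H; apply NNPP; intro Hno; apply H; intros G tG Gx.
  apply NNPP; intro Hmiss; apply Hno; exists G; repeat split; auto.
  intros y Gy Ay; apply Hmiss; exists y; auto.
Qed.

Lemma closure_meets_open (A G : set X) :
  tau G -> (exists y, G y /\ closure tau A y) -> exists y, G y /\ A y.
Proof. intros tG [y [Gy Hy]]; exact (Hy G tG Gy). Qed.

Lemma closure_union_locally_countable {I : Type} (F : I -> set X) (J : I -> Prop) :
  is_topology tau -> P_space tau -> locally_countable tau F ->
  subset (closure tau (fun x => exists k, J k /\ F k x))
         (fun x => exists k, J k /\ closure tau (F k) x).
Proof.
  intros [tau_full [tau_inter _]] HP HF x Hx; apply NNPP; intro Hout.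
  destruct (HF x) as [G [tG [Gx [f Hf]]]].
  set (near := fun k => exists y, G y /\ F k y) in Hf.
  (* injectivity of f: the n-th set only has to avoid the one member of index n near x *)
  assert (Hsep : forall n, exists H, tau H /\ H x /\
            forall k, J k -> near k -> f k = n -> forall y, H y -> ~ F k y).
  { intro n. destruct (classic (exists k, J k /\ near k /\ f k = n))
      as [[k [Jk [Nk fk]]] | none].
    - assert (Hk : ~ closure tau (F k) x) by (intro Hc; apply Hout; exists k; auto).
      destruct (not_in_closure _ _ Hk) as [H [tH [Hx' HFk]]].
      exists H; repeat split; auto.
      intros k' Jk' Nk' fk'; replace k' with k by (apply Hf; auto; congruence); exact HFk.
    - exists (fun _ => True); repeat split; auto.
      intros k Jk Nk fk; exfalso; apply none; eauto. }
  destruct (choice _ Hsep) as [H HH].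
  set (W := fun y => G y /\ forall n, H n y).
  assert (tW : tau W).
  { apply tau_inter; [exact tG | apply HP; intro n; apply HH]. }
  destruct (Hx W tW (conj Gx (fun n => proj1 (proj2 (HH n)))))
    as [y [[Gy HHy] [k [Jk Fky]]]].
  destruct (HH (f k)) as [_ [_ Hmiss]].
  exact (Hmiss k Jk (ex_intro _ y (conj Gy Fky)) eq_refl y (HHy (f k)) Fky).
Qed.

End Closure.

Lemma locally_countable_grouped {X I Delta : Type} (tau : set X -> Prop)
    (F : I -> set X) (g : I -> Delta) (E : Delta -> set X) :
  locally_countable tau F ->
  (forall a, subset (E a) (closure tau (fun x => exists k, g k = a /\ F k x))) ->
  locally_countable tau E.
Proof.
  intros HF HE x; destruct (HF x) as [G [tG [Gx HG]]].
  exists G; repeat split; auto.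
  refine (countable_set_sub _ _ _ (countable_set_image _ g HG)).
  intros a [y [Gy Ey]].
  destruct (closure_meets_open _ _ _ _ tG (ex_intro _ y (conj Gy (HE a y Ey))))
    as [z [Gz [k [gk Fkz]]]].
  exists k; split; [exists z |]; auto.
Qed.

Section RegularOpen.
Variables (X : Type) (taui tauj : set X -> Prop).

Lemma regular_open_interior_closure (A : set X) :
  ij_regular_open taui tauj (interior taui (closure tauj A)).
Proof.
  intro x; split.
  - intros [G [tG [Gx GA]]]; exists G; repeat split; auto.
    intros y Gy; apply subset_closure; exists G; auto.
  - apply interior_monotone.
    intros y Hy; apply closure_idem; revert y Hy.
    apply closure_monotone, interior_subset.
Qed.

Lemma regular_open_subset_interior_closure (V A : set X) :
  ij_regular_open taui tauj V -> subset V A -> subset V (interior taui (closure tauj A)).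
Proof.
  intros HV VA x Vx; apply HV in Vx; revert x Vx.
  apply interior_monotone, closure_monotone, VA.
Qed.

Theorem regular_open_cover_shrinking :
  is_topology tauj -> P_space tauj -> ij_r_nearly_paralindelof taui tauj ->
  forall (Delta : Type) (U : Delta -> set X),
    (forall a, ij_regular_open taui tauj (U a)) -> is_cover U ->
    exists V : Delta -> set X,
      (forall a, ij_regular_open taui tauj (V a)) /\ is_cover V /\
      locally_countable tauj V /\ (forall a, subset (closure tauj (V a)) (U a)).
Proof.
  intros Htop HP Hnp Delta U HU HcU.
  destruct (Hnp Delta U HU HcU) as [B [W [HWro [HcW [HlcW HWU]]]]].
  destruct (choice _ HWU) as [g Hg].
  set (A := fun a x => exists b, g b = a /\ W b x).
  assert (HclA : forall a, subset (closure tauj (A a)) (U a)).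
  { intros a x Hx.
    destruct (closure_union_locally_countable _ _ W (fun b => g b = a) Htop HP HlcW x Hx)
      as [b [<- Hb]].
    exact (Hg b x Hb). }
  exists (fun a => interior taui (closure tauj (A a))); split; [| split; [| split]].
  - intro a; apply regular_open_interior_closure.
  - intro x; destruct (HcW x) as [b Wbx]; exists (g b).
    apply (regular_open_subset_interior_closure (W b)); auto.
    intros y Wby; exists b; auto.
  - apply (locally_countable_grouped _ W g); auto.
    intro a; apply interior_subset.
  - intros a x Hx; apply HclA, closure_idem.
    revert x Hx; apply closure_monotone, interior_subset.
Qed.

End RegularOpen.

Theorem mainTheorem11 (X : Type) (tau1 tau2 : set X -> Prop)
  (Ht1 : is_topology tau1) (Ht2 : is_topology tau2)
  (i j : nat) (Hi : i = 1 \/ i = 2) (Hj : j = 1 \/ j = 2) (Hij : i <> j)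
  (Hnp : ij_r_nearly_paralindelof (btop tau1 tau2 i) (btop tau1 tau2 j))
  (Har : ij_almost_regular (btop tau1 tau2 i) (btop tau1 tau2 j))
  (HP : P_space (btop tau1 tau2 j)) :
  forall (Delta : Type) (U : Delta -> set X),
    (forall a, ij_regular_open (btop tau1 tau2 i) (btop tau1 tau2 j) (U a)) ->
    is_cover U ->
    exists V : Delta -> set X,
      (forall a, ij_regular_open (btop tau1 tau2 i) (btop tau1 tau2 j) (V a)) /\
      is_cover V /\
      locally_countable (btop tau1 tau2 j) V /\
      (forall a, subset (closure (btop tau1 tau2 j) (V a)) (U a)).
Proof.
  apply regular_open_cover_shrinking; auto.
  apply btop_topology; assumption.
Qed.
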